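(* The following conjecture of Lovett, Meka, Mertz, Pitassi and Zhang is false when $m\leq \log_2 (N/\Delta)-\omega(1)$: ''There exists $c$ such that for all large enough $m$ the following holds: Let $\mathcal{X},\mathcal{Y}$ be distributions on $[m]^N$ and $(\{0,1\}^m)^N$, respectively, each with entropy deficiency at most $\Delta$. Then there exist $I\subseteq [N]$ with $|I|\leq c\Delta$ and $\gamma\in\{0,1\}^I$ such that for all $z\in\{0,1\}^N$ with $z_I=\gamma$ we have $\Pr_{x\sim\mathcal{X},\,y\sim\mathcal{Y}}[\mathrm{IND}_m^N(x,y)=z]>0$.'' Moreover, for all $\Delta$, when $m\le (1-\alpha)\log_2 N$, there exist such distributions $\mathcal{X}$ (uniform on $[m]^N$) and $\mathcal{Y}$ of entropy deficiency at most $\Delta$ such that for any set $I\subseteq[N]$ and $\gamma\in\{0,1\}^I$ for which the property ''for all $z\in\{0,1\}^N$ with $z_I=\gamma$, $\Pr_{x\sim\mathcal{X},\,y\sim\mathcal{Y}}[\mathrm{IND}_m^N(x,y)=z]>0$'' holds, $|I|$ must be $\Omega(N^\alpha)$.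
   Context: $\mathrm{IND}_m:[m]\times\{0,1\}^m\to\{0,1\}$ is the Index function $\mathrm{IND}_m(x,y)=y_x$, and $\mathrm{IND}_m^N$ applies it coordinatewise to $x\in[m]^N$, $y\in(\{0,1\}^m)^N$. The entropy deficiency of a distribution on a universe $U$ is $\log_2|U|$ minus its entropy; for a set it is that of the uniform distribution on the set. The min-entropy rate of a distribution on $U^N$ is the largest $\tau$ such that for every $J\subseteq[N]$ and $\alpha_J\in U^J$, $\Pr[x_J=\alpha_J]\le |U|^{-\tau|J|}$. *)

From HB Require Import structures.
From mathcomp Require Import all_boot all_order all_algebra.
From mathcomp Require Import reals exp.
Set Implicit Arguments. Unset Strict Implicit. Unset Printing Implicit Defensive.
Import Order.TTheory GRing.Theory Num.Theory.
Local Open Scope ring_scope.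

Section Defs.
Variable R : realType.

Definition log2 (x : R) : R := ln x / ln 2.

Definition is_dist (U : finType) (p : U -> R) : Prop :=
  (forall u, 0 <= p u) /\ \sum_(u : U) p u = 1.

Definition entropy (U : finType) (p : U -> R) : R :=
  - \sum_(u : U) (if p u == 0 then 0 else p u * log2 (p u)).

Definition deficiency (U : finType) (p : U -> R) : R :=
  log2 (#|U|%:R) - entropy p.

Definition unif (U : finType) : U -> R := fun _ => (#|U|%:R)^-1.

Definition Xspace (N m : nat) := {ffun 'I_N -> 'I_m}.
Definition Yspace (N m : nat) := {ffun 'I_N -> {ffun 'I_m -> bool}}.

Definition IND (m : nat) (x : 'I_m) (y : {ffun 'I_m -> bool}) : bool := y x.
Definition INDN (N m : nat) (x : Xspace N m) (y : Yspace N m)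
  : {ffun 'I_N -> bool} := [ffun i => IND (x i) (y i)].

Definition prIND (N m : nat) (X : Xspace N m -> R) (Y : Yspace N m -> R)
  (z : {ffun 'I_N -> bool}) : R :=
  \sum_(x : Xspace N m) \sum_(y : Yspace N m)
     (if INDN x y == z then X x * Y y else 0).

(* the property of (I, gamma): every z with z_I = gamma has positive
   probability.  gamma in {0,1}^I is encoded as a function on [N] of which
   only the values on I matter. *)
Definition good_fix (N m : nat) (X : Xspace N m -> R) (Y : Yspace N m -> R)
  (I : {set 'I_N}) (gamma : {ffun 'I_N -> bool}) : Prop :=
  forall z : {ffun 'I_N -> bool},
    (forall i, i \in I -> z i = gamma i) -> 0 < prIND X Y z.

End Defs.

(* Let mu = N / 2^m be the expected number of coordinates i at which a uniform
   y has y_i = 0, the all-zero row; there IND(x_i, y_i) = 0 whatever x is.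
   Take Y uniform on the y having at least mu/2 such coordinates.  If |I| < mu/2
   then every y in the support has a zero row outside I, so the output that is
   1 off I has probability 0: every good fixing set has |I| >= mu/2.  The number
   of zero rows is binomial with mean mu and variance at most mu, so by Chebyshev
   at most a fraction 4/mu of all y is discarded, and the deficiency of Y,
   log2 (#all y / #support), is at most 16/mu once mu >= 8.  The two claims
   follow by taking mu >= 2^K Delta, resp. mu >= N^alpha. *)

From HB Require Import structures.
From mathcomp Require Import all_boot all_order all_algebra.
From mathcomp Require Import reals exp ring lra.
Set Implicit Arguments.
Unset Strict Implicit.
Unset Printing Implicit Defensive.
Import Order.TTheory GRing.Theory Num.Theory.
Local Open Scope ring_scope.

Section UniformDistributions.
Variable R : realType.
Implicit Types U : finType.

Lemma sumr_mem U (A : {pred U}) : \sum_(u : U) ((u \in A)%:R : R) = #|A|%:R.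
Proof.
rewrite (eq_bigr (fun u => if u \in A then 1 else 0)) => [|u _]; last by case: (u \in A).
by rewrite -big_mkcond sumr_const.
Qed.

Lemma ln2_ge_half : 1 / 2 <= ln (2 : R).
Proof.
have := @le_ln1Dx R (- 2^-1) ltac:(lra).
by rewrite (_ : 1 + - 2^-1 = 2^-1 :> R) ?lnV ?posrE //; [lra | field].
Qed.

Definition unif_on U (S : {set U}) : U -> R :=
  fun u => if u \in S then #|S|%:R^-1 else 0.

Lemma is_dist_unif_on U (S : {set U}) : (0 < #|S|)%N -> is_dist (unif_on S).
Proof.
move=> S_gt0; split=> [u|]; first by rewrite /unif_on; case: ifP; rewrite ?invr_ge0.
rewrite (eq_bigr (fun u => (u \in S)%:R * #|S|%:R^-1)) => [|u _]; last first.
  by rewrite /unif_on; case: (u \in S); rewrite ?mul1r ?mul0r.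
by rewrite -mulr_suml sumr_mem divff // pnatr_eq0 -lt0n.
Qed.

Lemma entropy_unif_on U (S : {set U}) : entropy (unif_on S) = log2 #|S|%:R.
Proof.
rewrite /entropy (eq_bigr (fun u => (u \in S)%:R * (#|S|%:R^-1 * log2 #|S|%:R^-1))).
  rewrite -mulr_suml sumr_mem mulrA /log2.
  have [->|S_gt0] := posnP #|S|; first by rewrite invr0 ln0 // !mul0r oppr0.
  by rewrite divff ?pnatr_eq0 -?lt0n // mul1r lnV ?posrE ?ltr0n // mulNr opprK.
move=> u _; rewrite /unif_on; case: (boolP (u \in S)) => [uS|_]; last by rewrite eqxx mul0r.
have S_gt0 : (0 < #|S|)%N by apply/card_gt0P; exists u.
by rewrite invr_eq0 pnatr_eq0 eqn0Ngt S_gt0 mul1r.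
Qed.

Lemma deficiency_unif_on_le U (S : {set U}) : (0 < #|S|)%N ->
  deficiency (unif_on S) <= 2 * (#|~: S|%:R / #|S|%:R).
Proof.
move=> S_gt0; set a : R := #|S|%:R; set b : R := #|~: S|%:R.
have a_gt0 : 0 < a by rewrite ltr0n.
have b_ge0 : 0 <= b by [].
have ln2_gt0 : 0 < ln (2 : R) by rewrite ln_gt0 ?ltr1n.
have cardU : #|U|%:R = a * (1 + b / a).
  by rewrite mulrDr mulr1 mulrC divfK ?gt_eqF // -natrD cardsC.
have ba_ge0 : 0 <= b / a := divr_ge0 b_ge0 (ltW a_gt0).
rewrite /deficiency entropy_unif_on /log2 cardU -mulrBl lnM ?posrE //; last first.
  by rewrite ltr_wpDr.
rewrite addrAC subrr add0r ler_pdivrMr //.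
have := @le_ln1Dx R (b / a) (lt_le_trans (ltrN10 R) ba_ge0).
have := ln2_ge_half; nra.
Qed.

Lemma is_dist_unif U : (0 < #|U|)%N -> is_dist (@unif R U).
Proof.
move=> U_gt0; have [unif_ge0 unif_sum1] := @is_dist_unif_on U setT ltac:(by rewrite cardsT).
split=> [u|]; first by have := unif_ge0 u; rewrite /unif_on in_setT cardsT.
by rewrite -unif_sum1; apply: eq_bigr => u _; rewrite /unif_on in_setT cardsT.
Qed.

Lemma deficiency_unif U : deficiency (@unif R U) = 0.
Proof.
rewrite /deficiency (_ : entropy _ = entropy (unif_on [set: U])).
  by rewrite entropy_unif_on cardsT subrr.
by congr (- _); apply: eq_bigr => u _; rewrite /unif_on in_setT cardsT.
Qed.

Lemma chebyshev_card U (f : U -> R) (a t : R) : t <= a ->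
  #|[set u | f u < t]|%:R * (a - t) ^+ 2 <= \sum_(u : U) (f u - a) ^+ 2.
Proof.
move=> le_ta; rewrite -sumr_mem mulr_suml; apply: ler_sum => u _.
rewrite inE; case: ltrP => [lt_ft|_]; last by rewrite mul0r sqr_ge0.
by rewrite mul1r; nra.
Qed.

End UniformDistributions.

Section Hits.
Variables (R : realType) (B : finType) (b0 : B) (N : nat).
Implicit Types (y : {ffun 'I_N -> B}) (A I : {set 'I_N}).

Definition hits y : R := \sum_(i < N) (y i == b0)%:R.

Let M : R := #|B|%:R.
Let T : R := M ^+ N.

Lemma cardB_gt0 : 0 < M.
Proof. by rewrite ltr0n; apply/card_gt0P; exists b0. Qed.

Lemma natr_card_ffun : #|{ffun 'I_N -> B}|%:R = T.
Proof. by rewrite card_ffun card_ord natrX. Qed.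

Lemma card_eq_on A :
  #|[set y : {ffun 'I_N -> B} | [forall i in A, y i == b0]]|%:R = T / M ^+ #|A|.
Proof.
have M_neq0 := lt0r_neq0 cardB_gt0.
have le_AN : (#|A| <= N)%N by rewrite -[leqRHS](card_ord N) max_card.
have -> : #|[set y : {ffun 'I_N -> B} | [forall i in A, y i == b0]]|
          = #|pffun_on b0 (~: A) predT|.
  apply: eq_card => y; rewrite inE; apply/forall_inP/pffun_onP => [y_eq | [y_supp _] i iA].
    split=> [|//]; apply/subsetP => i; rewrite !inE; apply: contraR => /negbNE iA.
    by rewrite y_eq.
  by apply/eqP; apply: contraTeq iA => /(subsetP y_supp); rewrite !inE.
have cardAC : #|~: A| = (N - #|A|)%N.
  by apply/eqP; rewrite -(eqn_add2l #|A|) cardsC card_ord subnKC.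
rewrite card_pffun_on cardAC natrX /T; move: (#|A|) le_AN => k le_kN.
by rewrite -{2}(subnK le_kN) exprD mulfK // expf_neq0.
Qed.

Lemma sum_eq_on A :
  \sum_(y : {ffun 'I_N -> B}) ([forall i in A, y i == b0])%:R = T / M ^+ #|A|.
Proof. by rewrite -card_eq_on -sumr_mem; apply: eq_bigr => y _; rewrite inE. Qed.

Lemma sum_hits : \sum_(y : {ffun 'I_N -> B}) hits y = N%:R * (T / M).
Proof.
rewrite exchange_big /= (eq_bigr (fun=> T / M)) => [|i _].
  by rewrite sumr_const card_ord mulr_natl.
rewrite -[M in RHS]expr1 -(cards1 i) -sum_eq_on.
apply: eq_bigr => y _; congr (nat_of_bool _)%:R.
by apply/idP/forall_inP => [/eqP y_i j | ->]; rewrite ?inE // => /eqP ->; rewrite y_i.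
Qed.

Lemma sum_hits_sqr : \sum_(y : {ffun 'I_N -> B}) hits y ^+ 2
  = N%:R * (T / M) + N%:R * (N%:R - 1) * (T / M ^+ 2).
Proof.
have pair_eq_on i j y : ((y i == b0) && (y j == b0)) = [forall k in [set i; j], y k == b0].
  apply/andP/forall_inP => [[/eqP y_i /eqP y_j] k | y_ij].
    by rewrite !inE => /orP[] /eqP ->; rewrite ?y_i ?y_j.
  by split; apply: y_ij; rewrite !inE eqxx ?orbT.
have sum_pair i j :
    \sum_(y : {ffun 'I_N -> B}) ((y i == b0) && (y j == b0))%:R = T / M ^+ (i != j).+1.
  by rewrite -cards2 -sum_eq_on; apply: eq_bigr => y _; rewrite pair_eq_on.
have hits_sqr y : hits y ^+ 2 = \sum_i \sum_j ((y i == b0) && (y j == b0))%:R.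
  rewrite expr2 /hits mulr_suml; apply: eq_bigr => i _.
  by rewrite mulr_sumr; apply: eq_bigr => j _; rewrite -natrM mulnb.
rewrite (eq_bigr _ (fun y _ => hits_sqr y)) exchange_big /=.
rewrite (eq_bigr (fun=> T / M + (N%:R - 1) * (T / M ^+ 2))) => [|i _].
  by rewrite sumr_const card_ord -mulr_natl; ring.
rewrite exchange_big (bigD1 i) //= sum_pair eqxx expr1; congr (_ + _).
rewrite (eq_bigr (fun=> T / M ^+ 2)) => [|j j_neq_i]; last by rewrite sum_pair eq_sym j_neq_i.
have N_gt0 : (0 < N)%N by apply: leq_ltn_trans (ltn_ord i).
rewrite sumr_const -[_ / _ *+ _]mulr_natl; congr (_ * _).
have -> : #|[pred j | j != i]| = N.-1.
  by have := cardC1 i; rewrite card_ord => <-; apply: eq_card.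
by rewrite -subn1 natrB.
Qed.

Lemma exists_hit_notin y I : #|I|%:R < hits y -> exists2 i, i \notin I & y i = b0.
Proof.
move=> lt_I_hits.
suff /existsP[i /andP[iNI /eqP y_i]] : [exists i, (i \notin I) && (y i == b0)] by exists i.
apply: contraLR lt_I_hits; rewrite negb_exists => /forallP hits_in_I.
rewrite -leNgt -sumr_mem ler_sum // => i _.
by have := hits_in_I i; case: (y i == b0); rewrite ?andbT ?negbK => // ->.
Qed.

Let mu : R := N%:R / M.

Lemma sum_hits_dev_sqr : \sum_(y : {ffun 'I_N -> B}) (hits y - mu) ^+ 2 <= T * mu.
Proof.
have dev_sqr y : (hits y - mu) ^+ 2 = hits y ^+ 2 - (2 * mu) * hits y + mu ^+ 2.
  by rewrite /mu; ring.
rewrite (eq_bigr _ (fun y _ => dev_sqr y)) big_split sumrB /= -mulr_sumr.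
rewrite sum_hits_sqr sum_hits sumr_const -[mu ^+ 2 *+ _]mulr_natr natr_card_ffun.
have M_neq0 := lt0r_neq0 cardB_gt0.
have -> : N%:R * (T / M) + N%:R * (N%:R - 1) * (T / M ^+ 2) - 2 * mu * (N%:R * (T / M))
          + mu ^+ 2 * T = T * mu - N%:R * T / M ^+ 2 by rewrite /mu; field.
by rewrite lerBlDr lerDl !mulr_ge0 ?invr_ge0 ?exprn_ge0 // ltW ?cardB_gt0.
Qed.

Definition hit_often : {set {ffun 'I_N -> B}} := [set y | mu / 2 <= hits y].

Lemma card_not_hit_often : #|~: hit_often|%:R * mu <= 4 * T.
Proof.
have mu_ge0 : 0 <= mu := divr_ge0 (ler0n _ _) (ltW cardB_gt0).
have compl : ~: hit_often = [set y | hits y < mu / 2].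
  by apply/setP => y; rewrite !inE -ltNge.
have half_le : mu / 2 <= mu by lra.
have := chebyshev_card hits half_le.
rewrite -compl (_ : mu - mu / 2 = mu / 2); last by field.
have T_ge0 : 0 <= T by rewrite exprn_ge0 ?ltW ?cardB_gt0.
move/le_trans/(_ sum_hits_dev_sqr) => cheb.
have [->|mu_neq0] := eqVneq mu 0; first by rewrite mulr0 mulr_ge0.
have mu_gt0 : 0 < mu by rewrite lt0r mu_neq0.
by rewrite -(ler_pM2r mu_gt0); nra.
Qed.

Lemma card_hit_often_ge : 8 <= mu -> T <= 2 * #|hit_often|%:R.
Proof.
move=> mu_ge8; have := card_not_hit_often.
rewrite -natr_card_ffun -(cardsC hit_often) natrD.
have : 0 <= (#|~: hit_often|%:R : R) by [].
nra.
Qed.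

Lemma card_hit_often_gt0 : 8 <= mu -> (0 < #|hit_often|)%N.
Proof.
move=> /card_hit_often_ge; rewrite -(ltr0n R).
have : 0 < T by rewrite exprn_gt0 ?cardB_gt0.
lra.
Qed.

Lemma deficiency_unif_hit_often :
  8 <= mu -> deficiency (unif_on R hit_often) <= 16 / mu.
Proof.
move=> mu_ge8; apply: le_trans (deficiency_unif_on_le R (card_hit_often_gt0 mu_ge8)) _.
have a_gt0 : (0 : R) < #|hit_often|%:R by rewrite ltr0n card_hit_often_gt0.
have mu_gt0 : 0 < mu by lra.
rewrite ler_pdivlMr //.
suff : #|~: hit_often|%:R / #|hit_often|%:R * mu <= 8 by lra.
rewrite mulrAC ler_pdivrMr //.
by have := card_not_hit_often; have := card_hit_often_ge mu_ge8; lra.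
Qed.

End Hits.

Section IndexGadget.
Variables (R : realType) (N m : nat).

Definition zero_row : {ffun 'I_m -> bool} := [ffun=> false].

Lemma good_fix_card_ge (X : Xspace N m -> R) (Y : Yspace N m -> R) I gamma (k : R) :
  (forall y, Y y != 0 -> k <= hits R zero_row y) -> good_fix X Y I gamma -> k <= #|I|%:R.
Proof.
move=> supp_Y fix_I; rewrite leNgt; apply/negP => lt_I_k.
pose z : {ffun 'I_N -> bool} := [ffun i => if i \in I then gamma i else true].
have z_I i : i \in I -> z i = gamma i by rewrite ffunE => ->.
have := fix_I z z_I; rewrite /prIND big1 ?ltxx // => x _; apply: big1 => y _.
have [Y0|/supp_Y le_k_hits] := eqVneq (Y y) 0; first by rewrite Y0 mulr0 if_same.
have [i iNI y_i] := exists_hit_notin (lt_le_trans lt_I_k le_k_hits).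
case: eqP => [/ffunP/(_ i) | //].
by rewrite /INDN /IND /z !ffunE y_i (negbTE iNI) /zero_row ffunE.
Qed.

Let mu : R := N%:R / (2 ^ m)%:R.

Lemma exists_dist_forcing_large_fix (Delta : R) : 8 <= mu -> 16 <= mu * Delta ->
  exists Y : Yspace N m -> R, [/\ is_dist Y, deficiency Y <= Delta &
    forall X I gamma, good_fix X Y I gamma -> mu / 2 <= #|I|%:R].
Proof.
have := @card_hit_often_gt0 R _ zero_row N.
have := @deficiency_unif_hit_often R _ zero_row N.
rewrite card_ffun card_bool card_ord -/mu => deficiency_le card_gt0 mu_ge8 mu_Delta.
exists (unif_on R (hit_often R zero_row N)); split.
- by apply: is_dist_unif_on; apply: card_gt0.
- apply: le_trans (deficiency_le mu_ge8) _.
  by rewrite ler_pdivrMr; lra.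
- move=> X I gamma; apply: good_fix_card_ge => y.
  rewrite /unif_on; case: ifPn => [|_]; last by rewrite eqxx.
  by rewrite inE card_ffun card_bool card_ord.
Qed.

End IndexGadget.

Section Asymptotics.
Variable R : realType.

Lemma exp2n_le_of_log2 (x : R) (n : nat) : (0 < n)%N -> n%:R <= log2 x -> 2 ^+ n <= x.
Proof.
move=> n_gt0 le_n_log; have ln2_gt0 : 0 < ln (2 : R) by rewrite ln_gt0 ?ltr1n.
have [x_le0|x_gt0] := lerP x 0.
  by move: le_n_log; rewrite /log2 ln0 // mul0r leNgt ltr0n n_gt0.
rewrite -ler_ln ?posrE ?exprn_gt0 // lnXn // -[ln _ *+ _]mulr_natr mulrC -ler_pdivlMr //.
Qed.

Lemma powR_le_div_exp2 (a : R) (N m : nat) : (0 < N)%N ->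
  m%:R <= (1 - a) * log2 N%:R -> N%:R `^ a <= N%:R / (2 ^ m)%:R.
Proof.
move=> N_gt0 le_m_log; have ln2_gt0 : 0 < ln (2 : R) by rewrite ln_gt0 ?ltr1n.
have N_pos : (0 : R) < N%:R by rewrite ltr0n.
rewrite -ler_ln ?posrE ?powR_gt0 ?divr_gt0 ?ltr0n ?expn_gt0 //.
rewrite ln_powR ln_div ?posrE ?ltr0n ?expn_gt0 // natrX lnXn // -[ln _ *+ _]mulr_natr.
move: le_m_log; rewrite /log2 mulrA ler_pdivlMr //; lra.
Qed.

Lemma no_small_fixing_set (c : R) : exists K : R,
  forall (N m : nat) (Delta : R), 1 <= Delta -> (0 < m)%N ->
    m%:R + K <= log2 (N%:R / Delta) ->
    exists (X : Xspace N m -> R) (Y : Yspace N m -> R),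
      [/\ is_dist X, is_dist Y, deficiency X <= Delta, deficiency Y <= Delta &
        forall (I : {set 'I_N}) (gamma : {ffun 'I_N -> bool}),
          #|I|%:R <= c * Delta -> ~ good_fix X Y I gamma].
Proof.
pose t := Num.truncn `|c|; exists (t + 5)%:R => N m Delta Delta_ge1 m_gt0.
rewrite -natrD => /(exp2n_le_of_log2 (ltn_addr _ m_gt0)) le_exp_N.
pose mu : R := N%:R / (2 ^ m)%:R; pose q : R := (2 ^ t)%:R.
have mu_ge : 32 * q * Delta <= mu.
  rewrite ler_pdivlMr ?ltr0n ?expn_gt0 // [leLHS]mulrAC -ler_pdivlMr; last by lra.
  apply: le_trans le_exp_N; rewrite /q -natrX -!natrM ler_nat.
  by rewrite !expnD mulnC [(2 ^ t * _)%N]mulnC.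
have c_lt_q : `|c| < q.
  apply: lt_le_trans (truncnS_gt _) _; rewrite ler_nat; exact: ltn_expl.
have q_ge1 : 1 <= q by rewrite /q ler1n expn_gt0.
have mu_ge8 : 8 <= mu by nra.
have mu_Delta : 16 <= mu * Delta by nra.
have [Y [dist_Y deficiency_Y fix_Y]] := exists_dist_forcing_large_fix mu_ge8 mu_Delta.
exists (@unif R _), Y; split => //.
- by apply: is_dist_unif; rewrite card_ffun !card_ord expn_gt0 m_gt0.
- by rewrite deficiency_unif; lra.
- move=> I gamma le_I_cDelta /fix_Y; rewrite -/mu => le_mu_I.
  have : c * Delta < q * Delta.
    by rewrite ltr_pM2r; [exact: le_lt_trans (ler_norm c) c_lt_q | lra].
  rewrite -mulrA in mu_ge; lra.
Qed.

Lemma fixing_set_card_ge_pow (Delta alpha : R) : 0 < Delta -> 0 < alpha < 1 ->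
  exists (c : R) (N0 : nat), 0 < c /\
    forall N m : nat, (N0 <= N)%N -> (0 < m)%N ->
      m%:R <= (1 - alpha) * log2 N%:R ->
      exists Y : Yspace N m -> R,
        [/\ is_dist Y, deficiency Y <= Delta &
          forall (I : {set 'I_N}) (gamma : {ffun 'I_N -> bool}),
            good_fix (@unif R _) Y I gamma -> c * (N%:R `^ alpha) <= #|I|%:R].
Proof.
move=> Delta_gt0 /andP[alpha_gt0 alpha_lt1].
have Delta_inv_ge0 : 0 <= 16 / Delta by rewrite divr_ge0 // ltW.
pose mu0 : R := 16 / Delta + 8.
exists (1 / 2), (Num.truncn (mu0 `^ alpha^-1)).+1.
split=> [|N m N_ge m_gt0 le_m_log]; first lra.
have N_gt0 : (0 < N)%N by apply: leq_trans N_ge.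
have mu0_le : 16 / Delta + 8 <= N%:R `^ alpha.
  have le_root_N : mu0 `^ alpha^-1 <= N%:R.
    by apply/ltW/(lt_le_trans (truncnS_gt _)); rewrite ler_nat.
  have := ge0_ler_powR (ltW alpha_gt0) _ _ le_root_N.
  rewrite -powRrM mulVf ?gt_eqF // powRr1; last by rewrite addr_ge0.
  by apply; rewrite nnegrE ?powR_ge0 ?ler0n.
have pow_le_mu := powR_le_div_exp2 N_gt0 le_m_log.
set mu := N%:R / (2 ^ m)%:R in pow_le_mu *.
have mu_ge8 : 8 <= mu by lra.
have mu_Delta : 16 <= mu * Delta by rewrite -ler_pdivrMr //; lra.
have [Y [dist_Y deficiency_Y fix_Y]] := exists_dist_forcing_large_fix mu_ge8 mu_Delta.
by exists Y; split=> // I gamma /fix_Y; rewrite -/mu; lra.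
Qed.

End Asymptotics.

Theorem corollary3 (R : realType) :
  (* (1) the LMMPZ conjecture fails in the regime m <= log2(N/Delta) - omega(1):
     for every constant c there is K such that whenever
     m <= log2(N/Delta) - K there are X, Y of deficiency <= Delta with
     no (I, gamma), |I| <= c Delta, having the property. *)
  (forall c : R, exists K : R,
     forall (N m : nat) (Delta : R),
       1 <= Delta -> (0 < m)%N ->
       m%:R + K <= log2 (N%:R / Delta) ->
       exists (X : Xspace N m -> R) (Y : Yspace N m -> R),
         [/\ is_dist X, is_dist Y, deficiency X <= Delta, deficiency Y <= Delta &
           forall (I : {set 'I_N}) (gamma : {ffun 'I_N -> bool}),
             #|I|%:R <= c * Delta -> ~ good_fix X Y I gamma]) /\
  (* (2) for every Delta > 0 and 0 < alpha < 1, when m <= (1 - alpha) log2 N,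
     with X uniform there is Y of deficiency <= Delta forcing |I| = Omega(N^alpha). *)
  (forall Delta alpha : R, 0 < Delta -> 0 < alpha < 1 ->
     exists (c : R) (N0 : nat), 0 < c /\
       forall N m : nat, (N0 <= N)%N -> (0 < m)%N ->
         m%:R <= (1 - alpha) * log2 N%:R ->
         exists Y : Yspace N m -> R,
           [/\ is_dist Y, deficiency Y <= Delta &
             forall (I : {set 'I_N}) (gamma : {ffun 'I_N -> bool}),
               good_fix (@unif R _) Y I gamma ->
               c * (N%:R `^ alpha) <= #|I|%:R]).
Proof. by split; [exact: no_small_fixing_set | exact: fixing_set_card_ge_pow]. Qed.
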